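(* Let $M$ be a matroid, let $\mathcal{T}$ be a tangle of $M$, let $X\subseteq E(M)$ be independent in the tangle matroid $M(\mathcal{T})$, and let $e\in X$. Then $X\setminus e$ is independent in the tangle matroid $(M\setminus e)(\mathcal{T}')$, where $\mathcal{T}'$ is the tangle of $M\setminus e$ inherited from $\mathcal{T}$.
   Context: $\lambda_M(X) = \rank_M(X) + \rank_M(E(M)\setminus X) - \rank(M)$. A tangle of order $\theta$ of $M$ is a collection $\mathcal{T}$ of subsets of $E(M)$ such that: (i) $\lambda_M(X)<\theta$ for all $X\in\mathcal{T}$; (ii) for every $X\subseteq E(M)$ with $\lambda_M(X)<\theta$, either $X\in\mathcal{T}$ or $E(M)\setminus X\in\mathcal{T}$; (iii) if $X,Y,Z\in\mathcal{T}$ then $X\cup Y\cup Z\neq E(M)$; (iv) $E(M)\setminus\{e\}\notin\mathcal{T}$ for every $e\in E(M)$. The tangle matroid $M(\mathcal{T})$ has rank function $\rank_{\mathcal{T}}(X) = \min\{\lambda_M(Y): X\subseteq Y\in\mathcal{T}\}$ if some member of $\mathcal{T}$ contains $X$, and $\theta$ otherwise. For a minor $N$ of $M$ with $S=E(M)\setminus E(N)$, the tangle of $N$ inherited from $\mathcal{T}$ is $\{X\setminus S: X\in\mathcal{T},\ \lambda_N(X\setminus S)<\theta-|S|\}$, a tangle of $N$ of order $\theta-|S|$. *)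

From mathcomp Require Import all_boot.
Set Implicit Arguments. Unset Strict Implicit. Unset Printing Implicit Defensive.

Definition is_matroid (T : finType) (E : {set T}) (r : {set T} -> nat) : Prop :=
  [/\ forall X : {set T}, X \subset E -> r X <= #|X|,
      forall X Y : {set T}, X \subset Y -> Y \subset E -> r X <= r Y &
      forall X Y : {set T}, X \subset E -> Y \subset E ->
        r (X :|: Y) + r (X :&: Y) <= r X + r Y].

(* connectivity function lambda_M(X) = r(X) + r(E \ X) - r(E)
   (nonnegative by submodularity, so truncated subtraction is harmless) *)
Definition conn (T : finType) (E : {set T}) (r : {set T} -> nat) (X : {set T}) : nat :=
  r X + r (E :\: X) - r E.

Definition is_tangle (T : finType) (E : {set T}) (r : {set T} -> nat)
    (theta : nat) (Tg : {set {set T}}) : Prop :=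
  [/\ Tg \subset powerset E,
      forall X : {set T}, X \in Tg -> conn E r X < theta,
      forall X : {set T}, X \subset E -> conn E r X < theta -> X \in Tg \/ E :\: X \in Tg,
      forall X Y Z : {set T}, X \in Tg -> Y \in Tg -> Z \in Tg -> X :|: Y :|: Z != E &
      forall e : T, e \in E -> E :\ e \notin Tg].

Definition tangle_rank (T : finType) (E : {set T}) (r : {set T} -> nat)
    (theta : nat) (Tg : {set {set T}}) (X : {set T}) : nat :=
  if [exists Y in Tg, X \subset Y]
  then \big[minn/theta]_(Y in Tg | X \subset Y) conn E r Y
  else theta.

Definition tangle_indep (T : finType) (E : {set T}) (r : {set T} -> nat)
    (theta : nat) (Tg : {set {set T}}) (X : {set T}) : Prop :=
  X \subset E /\ tangle_rank E r theta Tg X = #|X|.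

(* tangle of N = M \ e (ground set E \ e, same rank function) inherited from Tg,
   with S = {e}; it has order theta - 1 *)
Definition inherited_tangle_del (T : finType) (E : {set T}) (r : {set T} -> nat)
    (theta : nat) (Tg : {set {set T}}) (e : T) : {set {set T}} :=
  [set X :\ e | X in Tg & conn (E :\ e) r (X :\ e) < theta - 1].

From mathcomp Require Import all_boot zify.
From HB Require Import structures.

Set Implicit Arguments.
Unset Strict Implicit.
Unset Printing Implicit Defensive.

(* Two facts about connectivity carry the proof: deleting e never increases
   lambda, and adding e back costs at most one.  With the closure of a tangle
   under adding an element of small connectivity, the first shows that X \ e
   lies in a member of the inherited tangle of connectivity at most |X| - 1,
   and the second lifts every member Y \ e of the inherited tangle containing
   X \ e to the member e + Y of the original tangle, which contains X and so
   has connectivity at least |X|. *)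

HB.instance Definition _ := SemiGroup.isComLaw.Build nat minn minnA minnC.

Section BigMin.
Variables (I : finType) (P : pred I) (F : I -> nat) (idx : nat).

Lemma geq_bigmin k :
  k <= idx -> (forall i, P i -> k <= F i) -> k <= \big[minn/idx]_(i | P i) F i.
Proof.
by move=> le_k_idx le_kF; elim/big_ind: _ => // m n km kn; rewrite leq_min km kn.
Qed.

Lemma bigmin_le i0 : P i0 -> \big[minn/idx]_(i | P i) F i <= F i0.
Proof. by move=> Pi0; rewrite (bigD1 i0) //= geq_minl. Qed.

Lemma bigmin_le_idx : \big[minn/idx]_(i | P i) F i <= idx.
Proof. by elim/big_rec: _ => // i m _ le_m; rewrite geq_min le_m orbT. Qed.

End BigMin.

Section MatroidConnectivity.
Variables (T : finType) (E : {set T}) (r : {set T} -> nat).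
Hypothesis matroid_r : is_matroid E r.

Lemma rank_le_card {X : {set T}} : X \subset E -> r X <= #|X|.
Proof. by case: matroid_r => le_card _ _; apply: le_card. Qed.

Lemma rank_mono {X Y : {set T}} : X \subset Y -> Y \subset E -> r X <= r Y.
Proof. by case: matroid_r => _ mono _; apply: mono. Qed.

Lemma rank_submod {X Y : {set T}} : X \subset E -> Y \subset E ->
  r (X :|: Y) + r (X :&: Y) <= r X + r Y.
Proof. by case: matroid_r => _ _ submod; apply: submod. Qed.

Lemma rank_set0 : r set0 = 0.
Proof. by apply/eqP; rewrite -leqn0 -(cards0 T) rank_le_card ?sub0set. Qed.

Lemma rank_set1 {f} : f \in E -> r [set f] <= 1.
Proof. by move=> fE; rewrite -(cards1 f) rank_le_card ?sub1set. Qed.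

Lemma rank_setU1 {Y : {set T}} {f} : Y \subset E -> f \in E ->
  r (f |: Y) <= r Y + 1.
Proof.
move=> YE fE; have := rank_submod (Y:=[set f]) YE; rewrite sub1set setUC => /(_ fE).
by have := rank_set1 fE; lia.
Qed.

(* Submodularity applied to A and E \ e, whose union is E and meet is A \ e. *)
Lemma rank_setD1_exchange {A : {set T}} {e} : A \subset E -> e \in A ->
  r (A :\ e) + r E <= r A + r (E :\ e).
Proof.
move=> AE eA; have := rank_submod AE (subsetDl E [set e]).
have -> : A :|: E :\ e = E.
  apply/setP=> x; rewrite !inE; case: eqP => [->|_] /=; first by rewrite eA (subsetP AE).
  by case xA: (x \in A); rewrite // (subsetP AE).
have -> : A :&: (E :\ e) = A :\ e.
  by apply/setP=> x; rewrite !inE andbCA; case xA: (x \in A); rewrite ?andbF // (subsetP AE).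
by rewrite addnC.
Qed.

Lemma conn_set0 : conn E r set0 = 0.
Proof. by rewrite /conn rank_set0 setD0 subnn. Qed.

Lemma conn_set1 {f} : f \in E -> conn E r [set f] <= 1.
Proof.
move=> fE; rewrite /conn; have := rank_set1 fE.
by have := rank_mono (subsetDl E [set f]) (subxx E); lia.
Qed.

Lemma conn_setU1 {Y : {set T}} {f} : Y \subset E -> f \in E ->
  conn E r (f |: Y) <= conn E r Y + 1.
Proof.
move=> YE fE; rewrite /conn; have := rank_setU1 YE fE.
have := rank_mono (setDS E (subsetUr [set f] Y)) (subsetDl E Y); lia.
Qed.

Lemma conn_setD1 {Y : {set T}} {e} : Y \subset E -> e \in E ->
  conn (E :\ e) r (Y :\ e) <= conn E r Y.
Proof.
move=> YE eE; rewrite /conn.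
have -> : E :\ e :\: (Y :\ e) = (E :\: Y) :\ e.
  by apply/setP=> x; rewrite !inE; case: eqP.
have [eY | eNY] := boolP (e \in Y).
- have -> : (E :\: Y) :\ e = E :\: Y.
    by apply/setDidPl; rewrite disjoint_sym disjoints1 inE eY.
  by have := rank_setD1_exchange YE eY; lia.
- have -> : Y :\ e = Y by apply/setDidPl; rewrite disjoint_sym disjoints1.
  have eEY : e \in E :\: Y by rewrite inE eNY.
  by have := rank_setD1_exchange (subsetDl E Y) eEY; lia.
Qed.

Lemma conn_setU1_setD1 {Y : {set T}} {e} : Y \subset E -> e \in E ->
  conn E r (e |: Y) <= conn (E :\ e) r (Y :\ e) + 1.
Proof.
move=> YE eE; rewrite /conn.
have -> : e |: Y = e |: (Y :\ e) by apply/setP=> x; rewrite !inE; case: eqP.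
have YeE : Y :\ e \subset E by rewrite subDset subsetU // YE orbT.
have -> : E :\ e :\: (Y :\ e) = E :\: (e |: (Y :\ e)).
  by apply/setP=> x; rewrite !inE; case: eqP.
have := rank_setU1 YeE eE; have := rank_mono (subsetDl E [set e]) (subxx E); lia.
Qed.

End MatroidConnectivity.

Section TangleClosure.
Variables (T : finType) (E : {set T}) (r : {set T} -> nat).
Variables (theta : nat) (Tg : {set {set T}}).
Hypotheses (matroid_r : is_matroid E r) (tangle_Tg : is_tangle E r theta Tg).

Lemma tangle_subset {Y : {set T}} : Y \in Tg -> Y \subset E.
Proof. by case: tangle_Tg => /subsetP sub_pow _ _ _ _ /sub_pow; rewrite inE. Qed.

Lemma tangle_set0 : 0 < theta -> set0 \in Tg.
Proof.
move=> theta_gt0; case: tangle_Tg => _ _ orient cover _.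
have conn0 : conn E r set0 < theta by rewrite conn_set0.
have [//|] := orient set0 (sub0set E) conn0.
by rewrite setD0 => ETg; have := cover _ _ _ ETg ETg ETg; rewrite !setUid eqxx.
Qed.

Lemma tangle_set1 {f} : 1 < theta -> f \in E -> [set f] \in Tg.
Proof.
move=> theta_gt1 fE; case: tangle_Tg => _ _ orient _ no_coatom.
have conn_f : conn E r [set f] < theta.
  exact: leq_ltn_trans (conn_set1 matroid_r fE) theta_gt1.
have fE' : [set f] \subset E by rewrite sub1set.
have [//|coTg] := orient [set f] fE' conn_f.
by have := no_coatom f fE; rewrite coTg.
Qed.

(* Otherwise E \ (f + Y), Y and {f} would be three members of Tg covering E. *)
Lemma tangle_setU1 {Y : {set T}} {f} : 1 < theta -> Y \in Tg -> f \in E ->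
  conn E r (f |: Y) < theta -> f |: Y \in Tg.
Proof.
move=> theta_gt1 YTg fE conn_fY; case: tangle_Tg => _ _ orient cover _.
have fYE : f |: Y \subset E by rewrite subUset sub1set fE tangle_subset.
have [//|coTg] := orient _ fYE conn_fY.
have := cover _ _ _ YTg coTg (tangle_set1 theta_gt1 fE).
by rewrite setUC setUA -{2}(setID E (f |: Y)) (setIidPr fYE) eqxx.
Qed.

Lemma tangle_cover_small {Z : {set T}} : Z \subset E -> #|Z| < theta ->
  exists2 Y, Y \in Tg & Z \subset Y /\ conn E r Y <= #|Z|.
Proof.
move: {2}#|Z| (erefl #|Z|) => n; elim: n Z => [|n IHn] Z cardZ ZE ltZ.
  by exists set0; rewrite ?tangle_set0 -?cardZ // (cards0_eq cardZ) sub0set conn_set0.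
have [f fZ] : {f | f \in Z} by apply/sigW/card_gt0P; rewrite cardZ.
have fE : f \in E by apply: (subsetP ZE).
have cardZf : #|Z :\ f| = n by move: cardZ; rewrite (cardsD1 f) fZ => -[].
have ZfE : Z :\ f \subset E by rewrite subDset subsetU // ZE orbT.
have ltZf : #|Z :\ f| < theta by rewrite cardZf; lia.
have [Y YTg [sZfY connY]] := IHn (Z :\ f) cardZf ZfE ltZf.
have conn_fY := conn_setU1 matroid_r (tangle_subset YTg) fE.
rewrite cardZf in connY; rewrite cardZ in ltZ *.
exists (f |: Y); last split.
- by apply: tangle_setU1 => //; lia.
- by rewrite -subDset.
- by lia.
Qed.

End TangleClosure.

Section TangleRank.
Variables (T : finType) (E : {set T}) (r : {set T} -> nat).
Variables (theta : nat) (Tg : {set {set T}}).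

Lemma tangle_rank_le_order (X : {set T}) : tangle_rank E r theta Tg X <= theta.
Proof. by rewrite /tangle_rank; case: ifP => // _; apply: bigmin_le_idx. Qed.

Lemma tangle_rank_le_conn {X Y : {set T}} : Y \in Tg -> X \subset Y ->
  tangle_rank E r theta Tg X <= conn E r Y.
Proof.
move=> YTg sXY; rewrite /tangle_rank.
have -> : [exists Y in Tg, X \subset Y] by apply/existsP; exists Y; rewrite YTg.
by apply: bigmin_le; rewrite YTg.
Qed.

Lemma tangle_rank_ge (X : {set T}) k : k <= theta ->
  (forall Y, Y \in Tg -> X \subset Y -> k <= conn E r Y) ->
  k <= tangle_rank E r theta Tg X.
Proof.
move=> le_k_theta le_k_conn; rewrite /tangle_rank; case: ifP => // _.
by apply: geq_bigmin => // Y /andP[]; apply: le_k_conn.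
Qed.

End TangleRank.

Theorem lemma2p32 (T : finType) (E : {set T}) (r : {set T} -> nat)
    (theta : nat) (Tg : {set {set T}}) (X : {set T}) (e : T) :
  is_matroid E r ->
  is_tangle E r theta Tg ->
  tangle_indep E r theta Tg X ->
  e \in X ->
  tangle_indep (E :\ e) r (theta - 1) (inherited_tangle_del E r theta Tg e) (X :\ e).
Proof.
move=> matroid_r tangle_Tg [XE rankX] eX; have eE := subsetP XE e eX.
have XeE : X :\ e \subset E by rewrite subDset subsetU // XE orbT.
split; first exact: setSD.
rewrite (cardsD1 e) eX add1n in rankX; set n := #|X :\ e| in rankX *.
have lt_n_theta : n < theta by rewrite -rankX tangle_rank_le_order.
apply/eqP; rewrite eqn_leq; apply/andP; split.
- have [le_theta_n | lt_n_theta1] := leqP (theta - 1) n.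
    by apply: leq_trans le_theta_n; apply: tangle_rank_le_order.
  have [Y YTg [sXeY connY]] := tangle_cover_small matroid_r tangle_Tg XeE lt_n_theta.
  have connYe := conn_setD1 matroid_r (tangle_subset tangle_Tg YTg) eE.
  have YeTg : Y :\ e \in inherited_tangle_del E r theta Tg e.
    by apply/imsetP; exists Y => //; rewrite inE YTg /=; lia.
  have sXeYe : X :\ e \subset Y :\ e by rewrite subsetD1 sXeY setD11.
  by have := tangle_rank_le_conn (E :\ e) r (theta - 1) YeTg sXeYe; lia.
- apply: tangle_rank_ge => [|_ /imsetP[Y + ->] sXeYe]; first by lia.
  rewrite inE => /andP[YTg connYe].
  have connY := conn_setU1_setD1 matroid_r (tangle_subset tangle_Tg YTg) eE.
  have eYTg : e |: Y \in Tg by apply: (tangle_setU1 matroid_r tangle_Tg) => //; lia.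
  have sXeY : X \subset e |: Y by rewrite -subDset (subset_trans sXeYe) ?subsetDl.
  by have := tangle_rank_le_conn E r theta eYTg sXeY; lia.
Qed.
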